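(* Let $1\le i\le N$ and $w_1,w_2\in\mathcal A_i$ with $w_1\ne w_2$, and let $w_1^{-1}w_2=\prod_{\ell=1}^dA_{i_\ell,j_\ell}^{(k_\ell)}$, $d\ge1$, be the reduced representation of $w_1^{-1}w_2$. Then, as power series in $\lambda$ (in particular for all $|\lambda|\le1$), $$\mathcal R(w_1,w_2;\lambda)=\prod_{\ell=1}^dR_{i_\ell,j_\ell}^{(k_\ell)}(\lambda).$$
   Context: Fix an integer $N\ge 3$. Let $\mathcal G_N$ be the groupoid with object set $\{1,\dots,N\}$ generated by arrows $A_{i,j}^{(k)}$, $i\neq j\in\{1,\dots,N\}$, $k\in\{-1,1\}$, with source $i$ and target $j$, subject to the relations $A_{i,j}^{(k)}A_{j,\ell}^{(k)}=A_{i,\ell}^{(k)}$ for all $i,j,\ell$, $k$, with the convention $A_{i,i}^{(k)}:=e_i$ (unit at object $i$). Let $\mathcal A$ be its arrow set and $\mathcal A_i$ the set of arrows with source $i$. Every arrow has a unique reduced representation: either empty or $A_{i_1,i_2}^{(k)}A_{i_2,i_3}^{(-k)}\cdots A_{i_d,i_{d+1}}^{((-1)^{d+1}k)}$ with $d\ge1$, $i_\ell\ne i_{\ell+1}$. Let $\{W_n\}_{n\ge0}$ be the Markov chain on $\mathcal A$ with $P(W_{n+1}=y\mid W_n=x)=p_{i,j}^{(k)}$ if $x^{-1}y=A_{i,j}^{(k)}$ with $i\ne j$ and $0$ otherwise, where $p_{i,j}^{(k)}\in(0,1)$ and $\sum_{j\ne i}\sum_{k=\pm1}p_{i,j}^{(k)}=1$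 for each $i$; $P_x,E_x$ denote law and expectation with $W_0=x$. For $y\in\mathcal A$ let $\tau_y=\inf\{n\ge0:W_n=y\}$ and $\mathcal R(x,y;\lambda)=\sum_{n\ge0}P_x(\tau_y=n)\lambda^n$. For $x\in\mathcal A$ let $T(0,x)=\inf\{n\ge0:W_n=W_0x\}$ (possibly $\infty$) and $R_{i,j}^{(k)}(\lambda)=E_{e_i}[\lambda^{T(0,A_{i,j}^{(k)})}]$. *)

From HB Require Import structures.
From mathcomp Require Import all_boot all_order all_algebra.
From mathcomp Require Import all_classical all_reals all_analysis.
Set Implicit Arguments. Unset Strict Implicit. Unset Printing Implicit Defensive.
Import Order.TTheory GRing.Theory Num.Theory numFieldNormedType.Exports.
Local Open Scope ring_scope.

(* A sign k in {-1,1} is encoded as a bool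
   (true <-> k = 1, false <-> k = -1).  A letter (j, k) stands for the
   generator A_{t,j}^{(k)}, where t is the current target.
   An arrow is a pair (s, u) : source s and a word u of letters
   [:: (i_2,k); (i_3,-k); ...; (i_{d+1}, ...)] encoding
   A_{s,i_2}^{(k)} A_{i_2,i_3}^{(-k)} ... ; the empty word is e_s. *)
Definition letter N := ('I_N * bool)%type.
Definition arrow N := ('I_N * seq (letter N))%type.

Section Groupoid.
Variable N : nat.

Fixpoint red_from (t : 'I_N) (prevk : option bool) (u : seq (letter N)) : bool :=
  match u with
  | [::] => true
  | a :: u' => [&& a.1 != t,
                  (if prevk is Some k0 then a.2 != k0 else true)
                & red_from a.1 (Some a.2) u']
  end.

Definition reduced (w : arrow N) : bool := red_from w.1 None w.2.

Definition src (w : arrow N) : 'I_N := w.1.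
Definition tgt (w : arrow N) : 'I_N := last w.1 (map fst w.2).

Definition unit_arrow (i : 'I_N) : arrow N := (i, [::]).

(* right multiplication of an arrow x by the generator A_{tgt x, a.1}^{(a.2)}
   (meaningful when a.1 != tgt x), using A^{(k)}_{i,j} A^{(k)}_{j,l} = A^{(k)}_{i,l},
   A^{(k)}_{i,i} = e_i, and returning the reduced representation. *)
Definition mulgen (x : arrow N) (a : letter N) : arrow N :=
  let: (s, u) := x in
  match rev u with
  | (t, k0) :: ru0 =>
      if k0 == a.2 then
        let u0 := rev ru0 in
        if last s (map fst u0) == a.1 then (s, u0) else (s, rcons u0 a)
      else (s, rcons u a)
  | [::] => (s, [:: a])
  end.

Definition arrow_mul (x : arrow N) (u : seq (letter N)) : arrow N :=
  foldl mulgen x u.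

Variable R : realType.
Variable p : 'I_N -> 'I_N -> bool -> R.

(* probability weight of performing the successive steps s from x:
   the step (j,k) from the current state W has probability p_{tgt W, j}^{(k)}
   if j != tgt W and 0 otherwise; W_{n+1} = W_n A_{tgt W_n, j}^{(k)}. *)
Fixpoint wpath (x : arrow N) (s : seq (letter N)) : R :=
  match s with
  | [::] => 1
  | a :: s' => (if a.1 != tgt x then p (tgt x) a.1 a.2 else 0) * wpath (mulgen x a) s'
  end.

Fixpoint firsthit (x y : arrow N) (s : seq (letter N)) : bool :=
  match s with
  | [::] => x == y
  | a :: s' => (x != y) && firsthit (mulgen x a) y s'
  end.

Definition hit_prob (x y : arrow N) (n : nat) : R :=
  \sum_(s : n.-tuple (letter N)) wpath x s * (firsthit x y s)%:R.

(* coefficient of lambda^n in R(x,y;lambda) = sum_n P_x(tau_y = n) lambda^n *)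
Definition calR_coef (x y : arrow N) (n : nat) : R := hit_prob x y n.

(* P_{e_i}(T(0, A_{i,j}^{(k)}) = n), with T(0,x) = inf{n : W_n = W_0 x}:
   coefficient of lambda^n in R_{i,j}^{(k)}(lambda) *)
Definition Rgen_coef (i : 'I_N) (a : letter N) (n : nat) : R :=
  hit_prob (unit_arrow i) (arrow_mul (unit_arrow i) [:: a]) n.

Fixpoint factors (t : 'I_N) (u : seq (letter N)) : seq ('I_N * letter N) :=
  match u with
  | [::] => [::]
  | a :: u' => (t, a) :: factors a.1 u'
  end.

End Groupoid.

(* formal power series: coefficient sequences, Cauchy product *)
Definition ps_one (R : realType) : nat -> R := fun n => (n == 0%N)%:R.
Definition ps_mul (R : realType) (a b : nat -> R) : nat -> R :=
  fun n => \sum_(m < n.+1) a m * b (n - m)%N.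
Definition ps_prod (R : realType) (l : seq (nat -> R)) : nat -> R :=
  foldr (@ps_mul R) (@ps_one R) l.

Definition ps_terms (R : realType) (a : nat -> R) (lam : R) : R ^nat :=
  fun n => a n * lam ^+ n.
Definition ps_eval (R : realType) (a : nat -> R) (lam : R) : R :=
  limn (series (ps_terms a lam)).

From HB Require Import structures.
From mathcomp Require Import all_boot all_order all_algebra.
From mathcomp Require Import all_classical all_reals all_analysis.
From mathcomp Require Import zify.
Import Order.TTheory GRing.Theory Num.Theory numFieldNormedType.Exports.
Set Implicit Arguments. Unset Strict Implicit. Unset Printing Implicit Defensive.
Local Open Scope ring_scope.

(* Steps of the walk depend only on the target of the current arrow, so left
   multiplication by w1 carries the walk started at the unit e_t, t = tgt w1,
   to the walk started at w1: R(w1, w2; .) = R(e_t, u; .) where u is the reduced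
   word of w1^-1 w2.  Reaching the reduced word a u from e_t forces a visit to
   the generator A = (t, [:: a]): an arrow whose reduced word does not begin
   with a keeps this property after one step unless the step lands exactly on
   A.  The first-passage decomposition at A makes the coefficients of
   R(e_t, a u; .) the Cauchy product of those of R_a = R(e_t, A; .) and of
   R(A, a u; .) = R(e_{a.1}, u; .), and induction on u gives the product
   formula.  All coefficient sequences are sub-probability distributions, so
   for |lambda| <= 1 the series converge absolutely and Mertens' theorem
   turns the Cauchy product into the product of the values. *)

Arguments mulgen : simpl never.
Arguments arrow_mul : simpl never.

Section ReducedWords.
Variable N : nat.
Implicit Types (x : arrow N) (a : letter N) (w v : seq (letter N)) (s t : 'I_N).

Definition last_sign (o : option bool) w : option bool :=
  last o (map (fun a : letter N => Some a.2) w).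

Lemma red_from_cat t o w v : red_from t o (w ++ v) =
  red_from t o w && red_from (last t (map fst w)) (last_sign o w) v.
Proof. by elim: w t o => [|a w IH] t o //=; rewrite IH !andbA. Qed.

Lemma red_from_rcons t o w a : red_from t o (rcons w a) =
  [&& red_from t o w, a.1 != last t (map fst w) &
      (if last_sign o w is Some k then a.2 != k else true)].
Proof.
by rewrite -cats1 red_from_cat /=; case: (last_sign o w) => [k|] /=; rewrite ?andbT.
Qed.

Lemma last_sign_rcons o w a : last_sign o (rcons w a) = Some a.2.
Proof. by rewrite /last_sign map_rcons last_rcons. Qed.

Lemma red_from_none t o w : red_from t o w -> red_from t None w.
Proof. by case: w => [|a w] //= /and3P[-> _ ->]. Qed.

Lemma mulgen_nil s a : mulgen (s, [::]) a = (s, [:: a]).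
Proof. by []. Qed.

Lemma mulgen_rcons s w j k i ka : mulgen (s, rcons w (j, k)) (i, ka) =
  if k == ka then (if last s (map fst w) == i then (s, w) else (s, rcons w (i, ka)))
  else (s, rcons (rcons w (j, k)) (i, ka)).
Proof. by rewrite /mulgen rev_rcons revK. Qed.

Lemma tgt_rcons s w a : tgt (s, rcons w a) = a.1.
Proof. by rewrite /tgt map_rcons last_rcons. Qed.

Lemma tgt_mulgen x a : tgt (mulgen x a) = a.1.
Proof.
case: x a => s w [i ka]; case/lastP: w => [|w [j k]]; rewrite ?mulgen_rcons //.
by case: ifP => _; [case: eqP => [//|_]|]; rewrite tgt_rcons.
Qed.

Lemma src_mulgen x a : src (mulgen x a) = src x.
Proof.
case: x a => s w [i ka]; case/lastP: w => [|w [j k]]; rewrite ?mulgen_rcons //.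
by case: ifP => _ //; case: ifP.
Qed.

Lemma arrow_mul_cons x a w : arrow_mul x (a :: w) = arrow_mul (mulgen x a) w.
Proof. by []. Qed.

Lemma arrow_mul_rcons x w a : arrow_mul x (rcons w a) = mulgen (arrow_mul x w) a.
Proof. by rewrite /arrow_mul foldl_rcons. Qed.

Lemma tgt_arrow_mul x w : tgt (arrow_mul x w) = last (tgt x) (map fst w).
Proof. by elim: w x => [|a w IH] x //; rewrite arrow_mul_cons IH tgt_mulgen. Qed.

Lemma src_arrow_mul x w : src (arrow_mul x w) = src x.
Proof. by elim: w x => [|a w IH] x //; rewrite arrow_mul_cons IH src_mulgen. Qed.

Lemma reduced_mulgen x a : reduced x -> a.1 != tgt x -> reduced (mulgen x a).
Proof.
case: x a => s w [i ka]; case/lastP: w => [|w [j k]]; first by rewrite /reduced /= => _ ->.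
rewrite mulgen_rcons /reduced tgt_rcons /= red_from_rcons => /and3P[Hw Hj Hk] Hi.
case: (eqVneq k ka) => [<-{ka} | Nk].
  case: eqP => [//|Nl]; rewrite red_from_rcons Hw Hk andbT eq_sym.
  exact/eqP.
by rewrite !red_from_rcons Hw Hj Hk map_rcons last_rcons last_sign_rcons Hi [ka == k]eq_sym Nk.
Qed.

Lemma reduced_arrow_mul x w o : reduced x -> red_from (tgt x) o w ->
  reduced (arrow_mul x w).
Proof.
elim: w x o => [|a w IH] x o Hx //; rewrite arrow_mul_cons => /and3P[Ha _ Hw].
by apply: (IH _ (Some a.2)); rewrite ?tgt_mulgen ?reduced_mulgen.
Qed.

Lemma arrow_mul_cat s w v : red_from s None (w ++ v) -> arrow_mul (s, w) v = (s, w ++ v).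
Proof.
elim: v w => [|a v IH] w; first by rewrite cats0.
rewrite -cat_rcons arrow_mul_cons => Hwv; rewrite -IH //.
have : red_from s None (rcons w a) by move: Hwv; rewrite red_from_cat => /andP[].
case/lastP: w {Hwv} => [|w [j k]] //; case: a => i ka.
by rewrite mulgen_rcons red_from_rcons last_sign_rcons /= [k == _]eq_sym => /and3P[_ _ /negbTE->].
Qed.

Lemma mulgen_merge x r j k : reduced x -> r != tgt x -> j != r ->
  mulgen (mulgen x (r, k)) (j, k) = if j == tgt x then x else mulgen x (j, k).
Proof.
case: x => s w; case/lastP: w => [|w [q k1]] Hx Hr Hj.
  by rewrite mulgen_nil -[[:: (r, k)]]/(rcons [::] (r, k)) mulgen_rcons eqxx /= eq_sym.
rewrite !mulgen_rcons; move: Hx Hr; rewrite /reduced tgt_rcons red_from_rcons /=.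
move=> /and3P[Hw Hq Hk1] Hr.
case: (eqVneq k1 k) => [Ek1|Nk]; last by rewrite mulgen_rcons eqxx map_rcons last_rcons eq_sym.
subst k1; case: (eqVneq (last s (map fst w)) r) => [El|Nl].
  case/lastP: w Hw Hq Hk1 El => [|w [q0 k2]] Hw Hq Hk1 El;
    rewrite ?mulgen_rcons El [r == j]eq_sym (negbTE Hj).
    by rewrite mulgen_nil; case: eqP => [->|].
  by move: Hk1; rewrite last_sign_rcons [k2 == k]eq_sym => /negbTE->; case: eqP => [->|].
rewrite mulgen_rcons eqxx.
by case: (eqVneq j q) => [->|//]; rewrite [_ == q]eq_sym (negbTE Hq).
Qed.

Lemma mulgen_ohead x a :
  mulgen x a = (src x, [:: a]) \/ ohead (mulgen x a).2 \in [:: None; ohead x.2].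
Proof.
case: x a => s w [i k]; case/lastP: w => [|w [j k1]]; first by left.
rewrite mulgen_rcons; case: w => [|c w]; case: eqP => _; try case: eqP => _;
  by [left | right; rewrite /= !inE eqxx ?orbT].
Qed.

End ReducedWords.

Section LeftTranslation.
Variable N : nat.
Implicit Types (g h x y : arrow N) (a : letter N) (w : seq (letter N)).

Definition ltrans g x : arrow N := arrow_mul g x.2.

Lemma tgt_ltrans g x : src x = tgt g -> tgt (ltrans g x) = tgt x.
Proof. by case: x => t w /= ->; rewrite /ltrans tgt_arrow_mul. Qed.

Lemma reduced_ltrans g x : reduced g -> reduced x -> src x = tgt g -> reduced (ltrans g x).
Proof. by case: x => t w Hg Hx /= Ht; apply: (reduced_arrow_mul (o := None)); rewrite // -Ht. Qed.

Lemma ltrans_mulgen g x a : reduced g -> reduced x -> src x = tgt g -> a.1 != tgt x ->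
  ltrans g (mulgen x a) = mulgen (ltrans g x) a.
Proof.
case: x a => t w [i ka]; case/lastP: w => [|w [r k]] // Hg.
rewrite /reduced /src tgt_rcons red_from_rcons /= => /and3P[Hw Hr _] Ht Hi.
have Hgw : reduced (arrow_mul g w) by apply: (reduced_arrow_mul (o := None)); rewrite -?Ht.
have Htgt : tgt (arrow_mul g w) = last t (map fst w) by rewrite tgt_arrow_mul Ht.
rewrite mulgen_rcons /ltrans /= arrow_mul_rcons.
case: (eqVneq k ka) => [<-{ka}|_]; last by rewrite !arrow_mul_rcons.
rewrite mulgen_merge ?Htgt // eq_sym.
by case: eqP => _ //=; rewrite arrow_mul_rcons.
Qed.

Lemma ltrans_arrow_mul g x w o : reduced g -> reduced x -> src x = tgt g ->
  red_from (tgt x) o w -> ltrans g (arrow_mul x w) = arrow_mul (ltrans g x) w.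
Proof.
elim: w x o => [|a w IH] x o Hg Hx Hxg //; rewrite !arrow_mul_cons => /and3P[Ha _ Hw].
rewrite -ltrans_mulgen //; apply: (IH _ (Some a.2)) => //.
- exact: reduced_mulgen.
- by rewrite src_mulgen.
- by rewrite tgt_mulgen.
Qed.

Lemma ltrans_inverse g : reduced g -> exists h,
  [/\ reduced h, src h = tgt g, tgt h = src g & ltrans h g = unit_arrow (tgt g)].
Proof.
case: g => s w; elim/last_ind: w => [|w [j k] IH] Hg; first by exists (s, [::]).
move: (Hg); rewrite /reduced red_from_rcons /= => /and3P[Hw Hj _].
have [h [Hh Hhs Hht Hhw]] := IH Hw.
set r := last s (map fst w).
have Hr : reduced (j, [:: (r, k)]) by rewrite /reduced /= eq_sym Hj.
exists (ltrans (j, [:: (r, k)]) h); rewrite tgt_rcons; split.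
- exact: reduced_ltrans.
- by rewrite /ltrans src_arrow_mul.
- by rewrite tgt_ltrans.
rewrite {1}/ltrans -(ltrans_arrow_mul (o := None)) //; last by rewrite Hht.
rewrite arrow_mul_rcons -[arrow_mul h w]/(ltrans h (s, w)) Hhw /unit_arrow mulgen_nil.
by rewrite /ltrans /= arrow_mul_cons -[[:: (r, k)]]/(rcons [::] (r, k)) mulgen_rcons eqxx /= eqxx.
Qed.

Lemma ltransK g h x : reduced g -> reduced h -> src g = tgt h ->
  ltrans h g = unit_arrow (tgt g) -> reduced x -> src x = tgt g -> ltrans h (ltrans g x) = x.
Proof.
move=> Hg Hh Hgh Hhg Hx Hxg; have Hw : red_from (tgt g) None x.2 by rewrite -Hxg.
rewrite [ltrans g x]/ltrans (ltrans_arrow_mul (o := None)) // Hhg arrow_mul_cat //.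
by case: x Hxg {Hx Hw} => ? ? /= ->.
Qed.

Lemma ltrans_inj g x y : reduced g -> reduced x -> reduced y -> src x = tgt g ->
  src y = tgt g -> ltrans g x = ltrans g y -> x = y.
Proof.
move=> Hg Hx Hy Hxg Hyg Exy; have [h [Hh _ Hht Hhg]] := ltrans_inverse Hg.
by rewrite -(ltransK Hg Hh _ Hhg Hx Hxg) // -(ltransK Hg Hh _ Hhg Hy Hyg) // Exy.
Qed.

End LeftTranslation.

Section PowerSeries.
Variable R : realType.
Local Open Scope classical_set_scope.
Implicit Types (a b : nat -> R) (lam : R).

Lemma ge0_series_nondecreasing (u : R ^nat) :
  (forall k, 0 <= u k) -> nondecreasing_seq (series u).
Proof. by move=> u_ge0; apply: (nondecreasing_series (P := xpredT) (m := 0)). Qed.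

Lemma cvg_comp_half (u : R ^nat) (l : R) : u @ \oo --> l -> (fun n => u n./2) @ \oo --> l.
Proof.
move=> /cvgrPdist_le ul; apply/cvgrPdist_le => e e0.
have [M _ uM] := ul e e0; exists M.*2 => // n /= Mn.
by apply: uM; rewrite /= -(half_double M); apply: half_leq.
Qed.

Lemma ps_mul1 a : ps_mul (@ps_one R) a =1 a.
Proof.
move=> n; rewrite /ps_mul big_ord_recl /ps_one /= mul1r subn0 big1 ?addr0 // => m _.
by rewrite mul0r.
Qed.

Lemma series_ps_mul a b M : series (ps_mul a b) M = \sum_(i < M) a i * series b (M - i)%N.
Proof.
elim: M => [|M IH]; first by rewrite seriesEord /= !big_ord0.
rewrite seriesSr IH [RHS]big_ord_recr /= subSnn.
have E (i : 'I_M) : a i * series b (M.+1 - i)%N = a i * series b (M - i)%N + a i * b (M - i)%N.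
  by rewrite subSn ?seriesSr ?mulrDr // ltnW.
rewrite (eq_bigr _ (fun i _ => E i)) big_split /= -addrA; congr (_ + _).
by rewrite /ps_mul big_ord_recr /= subnn seriesEord /= big_ord1.
Qed.

Lemma ps_terms_mul a b lam :
  ps_terms (ps_mul a b) lam =1 ps_mul (ps_terms a lam) (ps_terms b lam).
Proof.
move=> n; rewrite /ps_terms /ps_mul mulr_suml; apply: eq_bigr => m _.
by rewrite -[in lam ^+ n](subnKC (ltnSE (ltn_ord m))) exprD mulrACA.
Qed.

(* The defect is the sum of the a_i b_j with i, j < M <= i + j, and all these
   pairs have max(i, j) >= M/2. *)
Lemma series_ps_mul_defect a b M :
  `|series a M * series b M - series (ps_mul a b) M| <=
  [normed series a] M * [normed series b] M - [normed series a] M./2 * [normed series b] M./2.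
Proof.
rewrite /= series_ps_mul (seriesEord a) /= mulr_suml -sumrB.
set sa := series (fun n => `|a n|); set sb := series (fun n => `|b n|).
have sb_up := ge0_series_nondecreasing (fun k => normr_ge0 (b k)).
have termwise (i : 'I_M) :
    `|a i * series b M - a i * series b (M - i)%N| <= `|a i| * (sb M - sb (M - i)%N).
  rewrite -mulrBr normrM ler_wpM2l // !sub_series_geq ?leq_subr //; exact: ler_norm_sum.
apply: le_trans (ler_norm_sum _ _ _) (le_trans (ler_sum _ (fun i _ => termwise i)) _).
under eq_bigr do rewrite mulrBr.
rewrite sumrB -mulr_suml.
have -> : \sum_(i < M) `|a i| = sa M by rewrite /sa seriesEord.
rewrite lerD2l lerN2.
pose v i := `|a i| * sb (M - i)%N.
have v_ge0 i : 0 <= v i by rewrite mulr_ge0 // sumr_ge0.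
apply: (le_trans _ (_ : series v M./2 <= _)).
  rewrite (seriesEord v) /sa seriesEord /= mulr_suml.
  apply: ler_sum => i _; rewrite ler_wpM2l //; apply: sb_up.
  by have := ltn_ord i; lia.
have -> : \sum_(i < M) `|a i| * sb (M - i)%N = series v M by rewrite (seriesEord v).
by apply: ge0_series_nondecreasing v_ge0 _ _ _; lia.
Qed.

Lemma cvg_series_ps_mul a b : cvgn [normed series a] -> cvgn [normed series b] ->
  series (ps_mul a b) @ \oo --> limn (series a) * limn (series b).
Proof.
move=> na nb.
have defect0 : (fun M => [normed series a] M * [normed series b] M -
                         [normed series a] M./2 * [normed series b] M./2) @ \oo --> 0.
  rewrite -(subrr (limn [normed series a] * limn [normed series b])).
  by apply: cvgB; [|apply: (cvg_comp_half (u := _ \* _))]; apply: cvgM.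
have err0 : (fun M => series a M * series b M - series (ps_mul a b) M) @ \oo --> 0.
  apply/cvgr0Pnorm_le => e e0; move/cvgr0Pnorm_le: defect0 => /(_ e e0).
  apply: filterS => M /= defectM.
  exact: le_trans (series_ps_mul_defect a b M) (le_trans (ler_norm _) defectM).
have -> : series (ps_mul a b) =
    (fun M => series a M * series b M - (series a M * series b M - series (ps_mul a b) M)).
  by apply/funext => M; rewrite opprB addrC subrK.
rewrite -[X in _ --> X]subr0; apply: cvgB err0.
by apply: cvgM; apply: normed_cvg.
Qed.

Definition substochastic a := (forall n, 0 <= a n) /\ (forall M, series a M <= 1).

Lemma substochastic_ps_one : substochastic (@ps_one R).
Proof.
split=> [n|[|M]]; rewrite ?ler0n // seriesEord /= ?big_ord0 ?ler01 //.
by rewrite big_ord_recl big1 ?addr0 // => i _.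
Qed.

Lemma substochastic_ps_mul a b : substochastic a -> substochastic b -> substochastic (ps_mul a b).
Proof.
move=> [a_ge0 a_le1] [b_ge0 b_le1]; split=> [n|M].
  by apply: sumr_ge0 => m _; apply: mulr_ge0.
rewrite series_ps_mul; apply: le_trans (a_le1 M); rewrite (seriesEord a) /=.
by apply: ler_sum => i _; rewrite ler_piMr.
Qed.

Lemma substochastic_ps_prod (T : Type) (F : T -> nat -> R) (s : seq T) :
  (forall t, substochastic (F t)) -> substochastic (ps_prod (map F s)).
Proof.
move=> F_sub; elim: s => [|t s IH]; first exact: substochastic_ps_one.
exact: substochastic_ps_mul.
Qed.

Lemma normed_cvg_ps_terms a lam : substochastic a -> `|lam| <= 1 ->
  cvgn [normed series (ps_terms a lam)].
Proof.
move=> [a_ge0 a_le1] lam_le1.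
apply: nondecreasing_is_cvgn.
  by move=> m n mn /=; apply: ge0_series_nondecreasing mn => k.
exists 1 => _ [M _ <-]; apply: le_trans (a_le1 M); rewrite /= !seriesEord /=.
apply: ler_sum => k _; rewrite normrM normrX ger0_norm // ler_piMr //.
exact: exprn_ile1.
Qed.

Lemma cvg_ps_terms a lam : substochastic a -> `|lam| <= 1 -> cvgn (series (ps_terms a lam)).
Proof. by move=> a_sub lam_le1; apply: normed_cvg; apply: normed_cvg_ps_terms. Qed.

Lemma ps_eval_mul a b lam :
  cvgn [normed series (ps_terms a lam)] -> cvgn [normed series (ps_terms b lam)] ->
  ps_eval (ps_mul a b) lam = ps_eval a lam * ps_eval b lam.
Proof.
move=> na nb; apply: cvg_lim => //.
by rewrite (funext (ps_terms_mul a b lam)); apply: cvg_series_ps_mul.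
Qed.

Lemma ps_eval_one lam : ps_eval (@ps_one R) lam = 1.
Proof.
apply: cvg_lim => //; apply: cvg_near_cst; exists 1%N => // -[|n] //= _.
rewrite seriesEord /= big_ord_recl /ps_terms /ps_one /= mul1r big1 ?addr0 // => i _.
by rewrite mul0r.
Qed.

Lemma ps_eval_prod (T : Type) (F : T -> nat -> R) (s : seq T) lam :
  (forall t, substochastic (F t)) -> `|lam| <= 1 ->
  ps_eval (ps_prod (map F s)) lam = \prod_(t <- s) ps_eval (F t) lam.
Proof.
move=> F_sub lam_le1; elim: s => [|t s IH]; first by rewrite big_nil ps_eval_one.
rewrite big_cons -IH /= ps_eval_mul //; apply: normed_cvg_ps_terms => //.
exact: substochastic_ps_prod.
Qed.

End PowerSeries.

Lemma sum_tupleS (V : nmodType) (T : finType) n (F : n.+1.-tuple T -> V) :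
  \sum_(u : n.+1.-tuple T) F u = \sum_(a : T) \sum_(t : n.-tuple T) F (cons_tuple a t).
Proof.
rewrite pair_big /= (reindex (fun q : T * n.-tuple T => cons_tuple q.1 q.2)) //=.
exists (fun u : n.+1.-tuple T => (thead u, behead_tuple u)) => [[a t] _ | u _] /=.
  by congr (_, _); apply: val_inj.
by apply: val_inj; rewrite /= [in RHS](tuple_eta u).
Qed.

Section HittingProbability.
Variables (N : nat) (R : realType) (p : 'I_N -> 'I_N -> bool -> R).
Implicit Types (g x y z : arrow N) (a : letter N).

Definition step_prob x a : R := if a.1 != tgt x then p (tgt x) a.1 a.2 else 0.

Lemma hit_prob0 x y : hit_prob p x y 0 = (x == y)%:R.
Proof.
by rewrite /hit_prob (big_pred1 [tuple]) /= ?mul1r // => u; rewrite /= (tuple0 u); apply/eqP.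
Qed.

Lemma hit_probS x y n : hit_prob p x y n.+1 =
  (x != y)%:R * \sum_a step_prob x a * hit_prob p (mulgen x a) y n.
Proof.
rewrite /hit_prob sum_tupleS; have [->|xy] /= := eqVneq x y.
  by rewrite mul0r; apply: big1 => a _; apply: big1 => t _; rewrite /= eqxx mulr0.
rewrite mul1r; apply: eq_bigr => a _; rewrite mulr_sumr; apply: eq_bigr => t _.
by rewrite /= xy mulrA.
Qed.

Lemma hit_prob_id y : hit_prob p y y =1 @ps_one R.
Proof. by case=> [|n]; rewrite ?hit_prob0 ?hit_probS eqxx ?mul0r. Qed.

Lemma hit_prob_ltrans g x y : reduced g -> reduced x -> reduced y ->
  src x = tgt g -> src y = tgt g -> hit_prob p (ltrans g x) (ltrans g y) =1 hit_prob p x y.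
Proof.
move=> Hg + Hy + Hyg n; elim: n x => [|n IH] x Hx Hxg;
  have Exy : (ltrans g x == ltrans g y) = (x == y)
    by apply/eqP/eqP => [/(ltrans_inj Hg Hx Hy Hxg Hyg)|->].
  by rewrite !hit_prob0 Exy.
rewrite !hit_probS Exy; congr (_ * _); apply: eq_bigr => a _.
rewrite /step_prob tgt_ltrans //; case: ifP => Ha; last by rewrite !mul0r.
by rewrite -ltrans_mulgen // IH ?reduced_mulgen ?src_mulgen.
Qed.

Lemma hit_prob_via (D : pred (arrow N)) y z :
  (forall x, D x -> x != y /\ x != z) ->
  (forall x a, D x -> a.1 != tgt x -> D (mulgen x a) \/ mulgen x a = y) ->
  forall x, D x -> hit_prob p x z =1 ps_mul (hit_prob p x y) (hit_prob p y z).
Proof.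
move=> D_ne D_step x Dx n; elim: n x Dx => [|n IH] x Dx; have [xy xz] := D_ne x Dx.
  by rewrite /ps_mul big_ord1 !hit_prob0 (negbTE xy) (negbTE xz) mul0r.
rewrite hit_probS xz mul1r /ps_mul big_ord_recl hit_prob0 (negbTE xy) mul0r add0r.
rewrite (eq_bigr (fun m : 'I_n.+1 => \sum_a step_prob x a * hit_prob p (mulgen x a) y m *
  hit_prob p y z (n - m)%N)); last by move=> m _; rewrite lift0 hit_probS xy mul1r mulr_suml.
rewrite exchange_big /=; apply: eq_bigr => a _.
under eq_bigr => m _ do rewrite -mulrA.
rewrite -mulr_sumr -/(ps_mul (hit_prob p (mulgen x a) y) (hit_prob p y z) n).
rewrite /step_prob; case: ifP => Ha; last by rewrite !mul0r.
congr (_ * _); case: (D_step x a Dx Ha) => [/IH -> //|->].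
by rewrite (funext (hit_prob_id y)) ps_mul1.
Qed.


Lemma hit_prob_unit_word t u : red_from t None u ->
  hit_prob p (unit_arrow t) (t, u) =1
  ps_prod [seq Rgen_coef p ta.1 ta.2 | ta <- factors t u].
Proof.
elim: u t => [|a u IH] t Hu n; first exact: hit_prob_id.
have /and3P[Ha _ Hu'] := Hu; have {}Hu' := red_from_none Hu'.
pose y : arrow N := (t, [:: a]).
pose D := [pred x : arrow N | (src x == t) && (ohead x.2 != Some a)].
have y_u : ltrans y (a.1, u) = (t, a :: u) by rewrite /ltrans arrow_mul_cat.
rewrite (hit_prob_via (D := D) (y := y)) /=; first last.
- by rewrite eqxx.
- move=> x b /andP[/eqP xt xa] _; rewrite src_mulgen xt eqxx /=.
  have [->|] := mulgen_ohead x b; last by move=> /[!inE] /orP[] /eqP->; left.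
  by rewrite xt; have [->|ba] := eqVneq b a; [right | left].
- by move=> x /andP[_ xa]; split; apply: contraNneq xa => ->; rewrite /= eqxx.
congr (ps_mul _ _ n); apply/funext => m; rewrite -y_u -[y]/(ltrans y (unit_arrow a.1)).
rewrite hit_prob_ltrans ?IH //.
by rewrite /reduced /= Ha.
Qed.

Lemma calR_coef_prod w1 w2 u : reduced w1 -> red_from (tgt w1) None u ->
  arrow_mul w1 u = w2 ->
  calR_coef p w1 w2 =1 ps_prod [seq Rgen_coef p ta.1 ta.2 | ta <- factors (tgt w1) u].
Proof.
move=> Hw1 Hu <- n; rewrite /calR_coef -(hit_prob_unit_word Hu n).
rewrite -[w1 in LHS]/(ltrans w1 (unit_arrow (tgt w1))) -/(ltrans w1 (tgt w1, u)).
exact: hit_prob_ltrans.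
Qed.

End HittingProbability.

Section Substochastic.
Variables (N : nat) (R : realType) (p : 'I_N -> 'I_N -> bool -> R).
Hypothesis p_ge0 : forall i j k, i != j -> 0 <= p i j k.
Hypothesis p_sum1 : forall i : 'I_N, \sum_(j < N | j != i) (p i j true + p i j false) = 1.
Implicit Types (x y : arrow N) (a : letter N).

Lemma step_prob_ge0 x a : 0 <= step_prob p x a.
Proof. by rewrite /step_prob; case: ifPn => // ax; rewrite p_ge0 // eq_sym. Qed.

Lemma sum_step_prob x : \sum_a step_prob p x a = 1.
Proof.
rewrite (eq_bigr (fun a => step_prob p x (a.1, a.2))); last by case.
rewrite -(pair_bigA _ (fun j k => step_prob p x (j, k))) -(p_sum1 (tgt x)) [RHS]big_mkcond.
apply: eq_bigr => j _; rewrite big_bool /step_prob /=.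
by case: ifP => _; rewrite ?addr0.
Qed.

Lemma wpath_ge0 x s : 0 <= wpath p x s.
Proof. by elim: s x => [|a s IH] x /=; rewrite ?mulr_ge0 ?(step_prob_ge0 x a). Qed.

Lemma substochastic_hit_prob x y : substochastic (hit_prob p x y).
Proof.
split=> [n|M]; first by apply: sumr_ge0 => s _; rewrite mulr_ge0 ?wpath_ge0.
elim: M x => [|M IH] x; first by rewrite seriesEord /= big_ord0 ler01.
rewrite seriesEord /= big_ord_recl hit_prob0; have [->|xy] := eqVneq x y.
  by rewrite big1 ?addr0 // => i _; rewrite lift0 hit_probS eqxx mul0r.
rewrite add0r (eq_bigr (fun i : 'I_M => \sum_a step_prob p x a * hit_prob p (mulgen x a) y i));
  last by move=> i _; rewrite lift0 hit_probS xy mul1r.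
rewrite exchange_big /= -(sum_step_prob x); apply: ler_sum => a _.
rewrite -mulr_sumr ler_piMr ?step_prob_ge0 //.
by have := IH (mulgen x a); rewrite seriesEord.
Qed.

End Substochastic.

Theorem lemma6p2 (R : realType) (N : nat) (HN : (3 <= N)%N)
  (p : 'I_N -> 'I_N -> bool -> R)
  (hp : forall (i j : 'I_N) (k : bool), i != j -> 0 < p i j k < 1)
  (hsum : forall i : 'I_N, \sum_(j < N | j != i) (p i j true + p i j false) = 1)
  (i : 'I_N) (w1 w2 : arrow N) (u : seq (letter N))
  (hw1 : reduced w1) (hw2 : reduced w2)
  (hs1 : src w1 = i) (hs2 : src w2 = i) (hne : w1 != w2)
  (hu : red_from (tgt w1) None u) (hmul : arrow_mul w1 u = w2) :
  (0 < size u)%N /\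
  (forall n : nat,
     calR_coef p w1 w2 n =
     ps_prod [seq Rgen_coef p ta.1 ta.2 | ta <- factors (tgt w1) u] n) /\
  (forall lam : R, `|lam| <= 1 ->
     cvgn (series (ps_terms (calR_coef p w1 w2) lam)) /\
     (forall ta, ta \in factors (tgt w1) u ->
        cvgn (series (ps_terms (Rgen_coef p ta.1 ta.2) lam))) /\
     ps_eval (calR_coef p w1 w2) lam =
     \prod_(ta <- factors (tgt w1) u) ps_eval (Rgen_coef p ta.1 ta.2) lam).
Proof.
have u_gt0 : (0 < size u)%N by case: u hu hmul => // _ w12; move: hne; rewrite -w12 eqxx.
have p_ge0 i' j k : i' != j -> 0 <= p i' j k by move=> ij; case/andP: (hp _ _ k ij) => /ltW.
have Rgen_sub (ta : 'I_N * letter N) : substochastic (Rgen_coef p ta.1 ta.2).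
  exact: substochastic_hit_prob.
have calR_prod := calR_coef_prod p hw1 hu hmul.
split=> //; split=> // lam lam_le1; rewrite (funext calR_prod) ps_eval_prod //.
split; last by split=> // ta _; apply: cvg_ps_terms.
by apply: cvg_ps_terms => //; apply: substochastic_ps_prod.
Qed.
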